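(* Let $n\ge2$, $a\in H_n\rtimes S_n$, $g\in C_{H_n}(a)$ and $i\in I(a)$. If $t_i(g)\neq0$, then $t_j(g)\neq0$ for all $j\in I(a)$ with $[j]_a\sim_a[i]_a$.
   Context: $\mathbb{N}=\{1,2,\dots\}$, $X_n=\{1,\dots,n\}\times\mathbb{N}$, permutations act on the right. $H_n$ is the group of bijections $g$ of $X_n$ with $z_i(g)\in\mathbb{N}$, $t_i(g)\in\mathbb{Z}$ such that $(i,m)g=(i,m+t_i(g))$ for all $m\ge z_i(g)$. $S_n$ acts by $(i,m)\sigma=(i\sigma,m)$; $H_n\rtimes S_n\le\mathrm{Sym}(X_n)$ is generated by $H_n$ and these; each $a$ is uniquely $\omega_a\sigma_a$ with $\omega_a\in H_n$, $\sigma_a\in S_n$, $t_i(a):=t_i(\omega_a)$. $C_{H_n}(a)=\{g\in H_n: ga=ag\}$. $[i]_a$ is the orbit of $i$ under $\langle\sigma_a\rangle$, $t_{[i]}(a)=\sum_{k\in[i]_a}t_k(a)$, $I(a)=\{i:t_{[i]}(a)\ne0\}$. For $i_1\in I(a)$, $m_1\in\mathbb{N}$: $X_{i,m}(a)=\{(i,m')\in X_n: m'\equiv m\bmod|t_{[i]}(a)|\}$, $X_{[i_1],m_1}(a)=\bigsqcup_{q=1}^{|[i_1]_a|}X_{i_q,m_q}(a)$ with $i_q=i_1\sigma_a^{q-1}$, $m_q=m_1+\sum_{d=1}^{q-1}t_{i_d}(a)$. Almost equal = finite symmetric difference. $\sim_a$ is the equivalence relation on $\{[k]_a:k\in I(a)\}$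 generated by $[i]_a\sim_a[j]_a$ whenever some $\langle a\rangle$-orbit is almost equal to $X_{[i],d}(a)\sqcup X_{[j],e}(a)$ for some $d,e\in\mathbb{N}$. *)

From mathcomp Require Import all_boot all_order all_algebra all_fingroup.
From Stdlib Require Import ClassicalEpsilon Relations.
Set Implicit Arguments. Unset Strict Implicit. Unset Printing Implicit Defensive.
Import GRing.Theory Num.Theory.
Local Open Scope ring_scope.
Local Open Scope int_scope.

(* Points of X_n.  The pair (i, k) with i : 'I_n, k : nat encodes the point
   (i+1, k+1) of X_n = {1..n} x N (N = {1,2,...}). *)
Definition pt (n : nat) := ('I_n * nat)%type.

Definition ray_transl n (f : pt n -> pt n) (i : 'I_n) (t : int) : Prop :=
  exists z : nat, forall m : nat, (z <= m)%N ->
    (f (i, m)).1 = i /\ ((f (i, m)).2)%:Z = (m%:Z + t)%R.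

Definition in_H n (f : pt n -> pt n) : Prop :=
  bijective f /\ forall i : 'I_n, exists t : int, ray_transl f i t.

(* t_i(f) (unique for f in H_n). *)
Definition transl n (f : pt n -> pt n) (i : 'I_n) : int :=
  epsilon (inhabits 0%R) (fun t => ray_transl f i t).

Definition sigma_act n (s : {perm 'I_n}) (x : pt n) : pt n := (s x.1, x.2).

(* The element a = omega_a sigma_a (right actions: first omega, then sigma). *)
Definition semi n (w : pt n -> pt n) (s : {perm 'I_n}) : pt n -> pt n :=
  fun x => sigma_act s (w x).

Local Open Scope ring_scope.

Definition tcl n (w : pt n -> pt n) (s : {perm 'I_n}) (i : 'I_n) : int :=
  \sum_(k in porbit s i) transl w k.

Definition inI n w s (i : 'I_n) : Prop := tcl w s i != 0.

Definition Xcl n w s (i1 : 'I_n) (m1 : int) : pt n -> Prop :=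
  fun x => exists2 q : nat, (q < #|porbit s i1|)%N &
    x.1 = (s ^+ q)%g i1 /\
    (((x.2).+1)%:Z = m1 + \sum_(d < q) transl w ((s ^+ d)%g i1)
       %[mod (`|tcl w s i1|%N)%:Z])%Z.

Definition finite_set n (P : pt n -> Prop) : Prop :=
  exists s : seq (pt n), forall x, P x -> x \in s.

Definition almost_equal n (A B : pt n -> Prop) : Prop :=
  finite_set (fun x => (A x /\ ~ B x) \/ (B x /\ ~ A x)).

Definition aorbit n (a : pt n -> pt n) (x : pt n) : pt n -> Prop :=
  fun y => exists k : nat, iter k a x = y \/ iter k a y = x.

Definition sim_gen n w s (A B : {set 'I_n}) : Prop :=
  exists i j : 'I_n, [/\ inI w s i, inI w s j, A = porbit s i, B = porbit s j &
    exists (x : pt n) (d e : nat), (0 < d)%N /\ (0 < e)%N /\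
      almost_equal (aorbit (semi w s) x)
        (fun y => Xcl w s i d%:Z y \/ Xcl w s j e%:Z y)].

Definition sim n w s (i j : 'I_n) : Prop :=
  clos_refl_sym_trans {set 'I_n} (@sim_gen n w s) (porbit s i) (porbit s j).

From mathcomp Require Import all_boot all_order all_algebra all_fingroup.
From mathcomp Require Import zify.
From Stdlib Require Import ClassicalEpsilon Relations.
Import GRing.Theory.
Set Implicit Arguments. Unset Strict Implicit.
Local Open Scope ring_scope.

(* Since g commutes with a, the fixed-point set of g is a union of <a>-orbits,
   and t_k(g) only depends on the sigma_a-orbit of k.  If t_j(g) = 0, then g fixes
   every point far out on ray j, in particular a point of X_{[j],e}(a) lying in
   an <a>-orbit almost equal to X_{[i],d}(a) u X_{[j],e}(a); hence g fixes that
   whole orbit, which contains points arbitrarily far out on ray i, forcing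
   t_i(g) = 0.  The relation ~_a is generated by such pairs. *)

Lemma transl_ray n (f : pt n -> pt n) (hf : in_H f) (k : 'I_n) :
  exists z : nat, forall m : nat, (z <= m)%N ->
    exists2 m' : nat, f (k, m) = (k, m') & m'%:Z = m%:Z + transl f k.
Proof.
have [z hz] : ray_transl f k (transl f k).
  by rewrite /transl; apply: epsilon_spec; case: hf => _ /(_ k).
exists z => m /hz [h1 h2]; exists (f (k, m)).2 => //.
by case: (f (k, m)) h1 => a b /= ->.
Qed.

Lemma ray_eventually_notin n (L : seq (pt n)) (k : 'I_n) :
  exists B : nat, forall m : nat, (B <= m)%N -> (k, m) \notin L.
Proof.
exists (\max_(p <- L) p.2).+1 => m hm; apply/negP => hL.
move: hm; rewrite ltnNge => /negP; apply.
exact: (@leq_bigmax_seq _ _ xpredT (fun p : pt n => p.2) _ hL).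
Qed.

Lemma semi_injective n (w : pt n -> pt n) (s : {perm 'I_n}) :
  injective w -> injective (semi w s).
Proof.
move=> w_inj x y; rewrite /semi /sigma_act => -[/perm_inj E1 E2].
by apply: w_inj; move: E1 E2; case: (w x) => ? ?; case: (w y) => ? ? /= -> ->.
Qed.

Section FixedPoints.

Variables (n : nat) (a g : pt n -> pt n).
Hypothesis a_inj : injective a.
Hypothesis ag_comm : forall x, a (g x) = g (a x).

Lemma fixed_iter k x : g (iter k a x) = iter k a x <-> g x = x.
Proof.
elim: k => [|k IH] //=; rewrite -ag_comm -IH.
by split=> [/a_inj | ->].
Qed.

Lemma aorbit_fixed x y : aorbit a x y -> (g x = x <-> g y = y).
Proof. by case=> k [<- | <-]; rewrite fixed_iter. Qed.

End FixedPoints.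

Lemma clos_refl_sym_trans_iff T (R : relation T) (P : T -> Prop) :
  (forall x y, R x y -> (P x <-> P y)) ->
  forall x y, clos_refl_sym_trans T R x y -> (P x <-> P y).
Proof.
move=> PR x y; elim=> [a b /PR | a | a b _ IH | a b c _ IH1 _ IH2] //; tauto.
Qed.

Section Centraliser.

Variables (n : nat) (w : pt n -> pt n) (s : {perm 'I_n}) (g : pt n -> pt n).
Hypothesis hw : in_H w.
Hypothesis hg : in_H g.
Hypothesis hcomm : forall x, semi w s (g x) = g (semi w s x).

(* Far out on ray k, a(g(k,m)) = (s k, m + t_k(g) + t_k(w)) while
   g(a(k,m)) = (s k, m + t_k(w) + t_{s k}(g)). *)
Lemma transl_perm k : transl g (s k) = transl g k.
Proof.
have [z1 Hw] := transl_ray hw k.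
have [z2 Hg] := transl_ray hg k.
have [z3 Hg'] := transl_ray hg (s k).
pose m := (z1 + z2 + z3 + `|transl g k| + `|transl w k|)%N.
have [m1 e1 e1'] := Hg m ltac:(rewrite /m; lia).
have [m2 e2 e2'] := Hw m1 ltac:(lia).
have [m3 e3 e3'] := Hw m ltac:(rewrite /m; lia).
have [m4 e4 e4'] := Hg' m3 ltac:(lia).
have := hcomm (k, m); rewrite /semi /sigma_act e1 /= e2 e3 /= e4.
by case; lia.
Qed.

Lemma transl_porbit k i : k \in porbit s i -> transl g k = transl g i.
Proof.
case/porbitP=> q ->; elim: q => [|q IH]; first by rewrite expg0 perm1.
by rewrite expgSr permM transl_perm.
Qed.

Lemma transl_fixed_far (k : 'I_n) : transl g k = 0 ->
  exists z : nat, forall m : nat, (z <= m)%N -> g (k, m) = (k, m).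
Proof.
move=> tk; have [z Hz] := transl_ray hg k; exists z => m /Hz [m' -> e].
by move: e; rewrite tk addr0 => /eqP; rewrite eqz_nat => /eqP ->.
Qed.

Lemma Xcl_ray_unbounded k (hk : inI w s k) (d N : nat) :
  exists2 m : nat, (N <= m)%N & Xcl w s k d%:Z (k, m).
Proof.
set M := `|tcl w s k|%N.
have M_gt0 : (0 < M)%N by rewrite absz_gt0.
exists (N.+1 * M + d %% M).-1; first by nia.
exists 0%N; first by rewrite card_gt0; apply/set0Pn; exists k; exact: porbit_id.
split; first by rewrite expg0 perm1.
rewrite big_ord0 addr0 prednK; last by nia.
by rewrite !modz_nat modnMDl modn_mod.
Qed.

(* Both X-sets reach arbitrarily far out on their rays, so beyond the finite
   set L they meet the orbit of x far out on rays i and j. *)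
Lemma orbit_Xcl_transl_eq0 i j (d e : nat) x (L : seq (pt n))
    (hi : inI w s i) (hj : inI w s j)
    (orbit_i : forall y, Xcl w s i d%:Z y -> y \notin L -> aorbit (semi w s) x y)
    (orbit_j : forall y, Xcl w s j e%:Z y -> y \notin L -> aorbit (semi w s) x y) :
  transl g j = 0 -> transl g i = 0.
Proof.
move=> tj; have a_inj := @semi_injective _ _ s (bij_inj hw.1).
have [zj fix_j] := transl_fixed_far tj.
have [Bj notin_j] := ray_eventually_notin L j.
have [mj mj_far Xj] := Xcl_ray_unbounded hj e (maxn zj Bj).
have [zi Hi] := transl_ray hg i.
have [Bi notin_i] := ray_eventually_notin L i.
have [mi mi_far Xi] := Xcl_ray_unbounded hi d (maxn zi Bi).
have orb_j := orbit_j _ Xj (notin_j mj ltac:(lia)).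
have orb_i := orbit_i _ Xi (notin_i mi ltac:(lia)).
have fix_x := proj2 (aorbit_fixed a_inj hcomm orb_j) (fix_j mj ltac:(lia)).
have := proj1 (aorbit_fixed a_inj hcomm orb_i) fix_x.
have [m' -> e'] := Hi mi ltac:(lia); case=> E; move: e'; rewrite E.
by lia.
Qed.

Lemma almost_orbit_transl_eq0 i j (d e : nat) x (hi : inI w s i) (hj : inI w s j) :
  almost_equal (aorbit (semi w s) x)
    (fun y => Xcl w s i d%:Z y \/ Xcl w s j e%:Z y) ->
  (transl g i = 0 <-> transl g j = 0).
Proof.
case=> L HL.
have in_orbit y : Xcl w s i d%:Z y \/ Xcl w s j e%:Z y -> y \notin L ->
    aorbit (semi w s) x y.
  move=> hy hL; apply: NNPP => no.
  by move/negP: hL; apply; apply: HL; right.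
split.
- by apply: (orbit_Xcl_transl_eq0 (d := e) (e := d) (L := L)) => // y hy;
    apply: in_orbit; [right | left].
- by apply: (orbit_Xcl_transl_eq0 (d := d) (e := e) (L := L)) => // y hy;
    apply: in_orbit; [left | right].
Qed.

Definition transl_eq0_on (A : {set 'I_n}) : Prop :=
  forall k, porbit s k = A -> transl g k = 0.

Lemma transl_eq0_on_porbit k : transl_eq0_on (porbit s k) <-> transl g k = 0.
Proof.
split=> [/(_ k erefl) // | tk k' Ek'].
by rewrite (transl_porbit (i := k)) // -Ek' porbit_id.
Qed.

Lemma sim_gen_transl_eq0 A B :
  sim_gen w s A B -> (transl_eq0_on A <-> transl_eq0_on B).
Proof.
case=> i [j [hi hj -> -> [x [d [e [_ [_ hae]]]]]]].
rewrite !transl_eq0_on_porbit.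
exact: almost_orbit_transl_eq0 hae.
Qed.

End Centraliser.

Theorem lemma6p2 (n : nat) (hn : (2 <= n)%N)
  (w : pt n -> pt n) (s : {perm 'I_n}) (hw : in_H w)
  (g : pt n -> pt n) (hg : in_H g)
  (hcomm : forall x, semi w s (g x) = g (semi w s x))
  (i : 'I_n) (hi : inI w s i) (hti : transl g i != 0) :
  forall j : 'I_n, inI w s j -> sim w s j i -> transl g j != 0.
Proof.
move=> j _ hji; apply/eqP => tj; move/eqP: hti; apply.
have := clos_refl_sym_trans_iff (sim_gen_transl_eq0 hw hg hcomm) hji.
by rewrite !(transl_eq0_on_porbit hw hg hcomm) => -[/(_ tj)].
Qed.
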